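(* The space $\overline{ARI}_{circneut}$ of circ-neutral moulds in $\overline{ARI}$ is closed under the $\overline{ari}$-bracket, hence forms a Lie algebra under it.
   Context: $\overline{ARI}$ is the space of moulds $A=(A^r)_{r\ge0}$ with $A^r\in\mathbb{Q}(v_1,\dots,v_r)$ and $A^0=0$. $A$ is circ-neutral if $\sum_{i=0}^{r-1}A(v_{i+1},\dots,v_r,v_1,\dots,v_i)=0$ for all $r>1$. For $A,B\in\overline{ARI}$ and $w=(v_1,\dots,v_r)$: $mu(A,B)(w)=\sum_{i=0}^rA(v_1,\dots,v_i)B(v_{i+1},\dots,v_r)$, $lu(A,B)=mu(A,B)-mu(B,A)$; $(\overline{amit}(B)\cdot A)(w)=\sum_{0\le i<j<r}A(v_1,\dots,v_i,v_{j+1},\dots,v_r)B(v_{i+1}-v_{j+1},\dots,v_j-v_{j+1})$; $(\overline{anit}(B)\cdot A)(w)=\sum_{1\le i<j\le r}A(v_1,\dots,v_i,v_{j+1},\dots,v_r)B(v_{i+1}-v_i,\dots,v_j-v_i)$; $\overline{arit}(B)=\overline{amit}(B)-\overline{anit}(B)$; and $\overline{ari}(A,B)=\overline{arit}(B)\cdot A-\overline{arit}(A)\cdot B+lu(A,B)$. *)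

From HB Require Import structures.
From mathcomp Require Import all_boot all_order all_algebra.
From mathcomp Require Import fraction generic_quotient.
From mathcomp Require Import mpoly.
Set Implicit Arguments. Unset Strict Implicit. Unset Printing Implicit Defensive.
Import Order.TTheory GRing.Theory Num.Theory.
Local Open Scope ring_scope.

(** Polynomials and rational functions in r variables v_1, ..., v_r over Q.
    The variable v_(m+1) is ''X_m (0-based indexing). *)
Definition Poly (r : nat) := {mpoly rat[r]}.
Definition RatFun (r : nat) := {fraction {mpoly rat[r]}}.

Definition mould := forall r : nat, RatFun r.

(** The (0-based) variable v_(j+1) in Q[v_1..v_r] (0 if out of range). *)
Definition var (r j : nat) : Poly r :=
  match (insub j : option 'I_r) with
  | Some i => 'X_i
  | None => 0
  end.

(** Substitution of a rational function in k variables: the m-th variable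
    (0-based, i.e. u_(m+1)) is replaced by the polynomial f m in r variables.
    (Computed on a representative numerator/denominator; all substitutions used
    below are injective on polynomials, so this is the usual field embedding.) *)
Definition subst (k r : nat) (f : nat -> Poly r) (x : RatFun k) : RatFun r :=
  let lq := [tuple f (nat_of_ord m) | m < k] in
  let p := @frac _ (repr x) in
  tofrac (comp_mpoly lq p.1) / tofrac (comp_mpoly lq p.2).

Definition in_ARI (A : mould) : Prop := A 0%N = 0.

Definition circ_neutral (A : mould) : Prop :=
  forall r : nat, (1 < r)%N ->
    \sum_(i < r) subst (fun m => var r ((m + i) %% r)) (A r) = 0.

(** mu(A,B)(w) = sum_{i=0}^r A(v_1..v_i) B(v_{i+1}..v_r). *)
Definition mu (A B : mould) : mould := fun r =>
  \sum_(i < r.+1)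
     subst (fun m => var r m) (A i) * subst (fun m => var r (i + m)) (B (r - i)%N).

Definition lu (A B : mould) : mould := fun r => mu A B r - mu B A r.

(** (amit(B).A)(w) = sum_{0<=i<j<r} A(v_1..v_i,v_{j+1}..v_r) B(v_{i+1}-v_{j+1},..,v_j-v_{j+1}). *)
Definition amit (B A : mould) : mould := fun r =>
  \sum_(j < r) \sum_(i < j)
     subst (fun m => if (m < i)%N then var r m else var r (j + (m - i))) (A (r - (j - i))%N)
   * subst (fun m => var r (i + m) - var r j) (B (j - i)%N).

(** (anit(B).A)(w) = sum_{1<=i<j<=r} A(v_1..v_i,v_{j+1}..v_r) B(v_{i+1}-v_i,..,v_j-v_i). *)
Definition anit (B A : mould) : mould := fun r =>
  \sum_(j < r.+1) \sum_(i < j | (0 < i)%N)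
     subst (fun m => if (m < i)%N then var r m else var r (j + (m - i))) (A (r - (j - i))%N)
   * subst (fun m => var r (i + m) - var r (i.-1)) (B (j - i)%N).

Definition arit (B A : mould) : mould := fun r => amit B A r - anit B A r.

Definition ari (A B : mould) : mould := fun r => arit B A r - arit A B r + lu A B r.

(* Let [cycsum x] be the sum of the [r] cyclic rotations of the variables of
   [x] in Q(v_1, ..., v_r), so that A is circ-neutral iff [cycsum (A r) = 0]
   for [r > 1]; [cycsum] is additive. Rotating the i-th term of [mu A B] by k
   gives the (r-i)-th term of [mu B A] rotated by k+i, so [cycsum] kills
   [lu A B]. In [arit B A], group the terms by the length l of the block of
   variables fed to B and by the rotated position p of that block: summed over
   all rotations, the factor of A becomes [cycsum (A (r - l))] evaluated on the
   complementary variables, which vanishes for [r - l > 1]; for [l = r - 1]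
   the [amit] and [anit] terms agree, the pivot after the block being also the
   one before it. *)

From Pilot Require Import Defs.
From HB Require Import structures.
From mathcomp Require Import all_boot all_order all_algebra.
From mathcomp Require Import fraction generic_quotient.
From mathcomp Require Import mpoly.
From mathcomp Require Import zify.
Set Implicit Arguments. Unset Strict Implicit. Unset Printing Implicit Defensive.
Import GRing.Theory.
Local Open Scope ring_scope.

Local Notation "x %:F" := (@tofrac _ x).

Section FracTheory.
Variable R : idomainType.

Lemma frac_repr (x : {fraction R}) : x = (frac (repr x)).1%:F / (frac (repr x)).2%:F.
Proof.
rewrite -[LHS]reprK; have d0 := denom_ratioP (repr x).
unlock tofrac; rewrite /GRing.inv /= /GRing.mul /=.
rewrite -FracField.pi_inv -FracField.pi_mul /FracField.invf /FracField.mulf /=.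
by rewrite !numden_Ratio ?oner_neq0 // mulr1 mul1r Ratio_numden.
Qed.

Lemma frac_eq (n d n' d' : R) : d != 0 -> d' != 0 ->
  (n%:F / d%:F == n'%:F / d'%:F) = (n * d' == n' * d).
Proof. by move=> d0 d'0; rewrite eqr_div ?tofrac_eq0 // -!tofracM tofrac_eq. Qed.

Lemma fracP (x : {fraction R}) : exists2 nd : R * R, nd.2 != 0 & x = nd.1%:F / nd.2%:F.
Proof. by exists (frac (repr x)); [exact: denom_ratioP | exact: frac_repr]. Qed.

End FracTheory.

Section FracMap.
Variables (R S : idomainType) (phi : {rmorphism R -> S}).
Hypothesis phi_inj : injective phi.

(* [subst] of [Defs] is [fracmap] of a polynomial substitution ([substE]);
   being computed on a representative, it respects the field operations only
   when the substitution is injective. *)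
Definition fracmap (x : {fraction R}) : {fraction S} :=
  (phi (frac (repr x)).1)%:F / (phi (frac (repr x)).2)%:F.

Lemma rmorph_inj_neq0 (d : R) : d != 0 -> phi d != 0.
Proof. by rewrite -(rmorph0 phi) (inj_eq phi_inj). Qed.

Lemma fracmap_frac (n d : R) : d != 0 -> fracmap (n%:F / d%:F) = (phi n)%:F / (phi d)%:F.
Proof.
move=> d0; rewrite /fracmap; set nd := frac _.
have nd0 : nd.2 != 0 := denom_ratioP _.
have /eqP := frac_repr (n%:F / d%:F); rewrite -/nd eq_sym frac_eq // => /eqP E.
by apply/eqP; rewrite frac_eq ?rmorph_inj_neq0 // -!rmorphM E.
Qed.

Lemma fracmap0 : fracmap 0 = 0.
Proof. by rewrite -(mul0r (1%:F)^-1) -tofrac0 fracmap_frac ?oner_neq0 // rmorph0 tofrac0 mul0r. Qed.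

Lemma fracmapD : {morph fracmap : x y / x + y}.
Proof.
move=> x y; have [[n1 d1] /= d1P ->] := fracP x; have [[n2 d2] /= d2P ->] := fracP y.
rewrite addf_div ?tofrac_eq0 // -!tofracM -tofracD !fracmap_frac ?mulf_neq0 //.
rewrite addf_div ?tofrac_eq0 ?rmorph_inj_neq0 // rmorphD !rmorphM /=.
by rewrite tofracD !tofracM.
Qed.

Lemma fracmapM : {morph fracmap : x y / x * y}.
Proof.
move=> x y; have [[n1 d1] /= d1P ->] := fracP x; have [[n2 d2] /= d2P ->] := fracP y.
rewrite mulf_div -!tofracM !fracmap_frac ?mulf_neq0 //.
by rewrite mulf_div !rmorphM.
Qed.

Lemma fracmapN : {morph fracmap : x / - x}.
Proof. by move=> x; apply/eqP; rewrite -subr_eq0 opprK -fracmapD addNr fracmap0. Qed.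

Lemma fracmapB : {morph fracmap : x y / x - y}.
Proof. by move=> x y; rewrite fracmapD fracmapN. Qed.

End FracMap.

Definition psubst k r (f : nat -> {mpoly rat[r]}) : {rmorphism {mpoly rat[k]} -> {mpoly rat[r]}} :=
  comp_mpoly [tuple f m | m < k].

Lemma substE k r (f : nat -> {mpoly rat[r]}) (x : RatFun k) : subst f x = fracmap (psubst k f) x.
Proof. by []. Qed.

Section VarsExt.
Variables (k r : nat) (f g : nat -> {mpoly rat[r]}).
Hypothesis fg : forall m, (m < k)%N -> f m = g m.

Lemma tuple_vars_ext : [tuple f m | m < k] = [tuple g m | m < k].
Proof. by apply: eq_mktuple => i; apply: fg. Qed.

Lemma psubst_ext : psubst k f =1 psubst k g.
Proof. by move=> p; rewrite /psubst tuple_vars_ext. Qed.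

Lemma subst_ext : @subst k r f =1 subst g.
Proof. by move=> x; rewrite /subst tuple_vars_ext. Qed.
End VarsExt.

Lemma psubst_var k r (f : nat -> {mpoly rat[r]}) m : (m < k)%N -> psubst k f (var k m) = f m.
Proof.
by move=> mk; rewrite /var insubT /= comp_mpolyXU -tnth_nth tnth_mktuple.
Qed.

Lemma psubst_id k (p : {mpoly rat[k]}) : psubst k (var k) p = p.
Proof.
have E : [tuple var k m | m < k] = [tuple 'X_i | i < k].
  by apply: eq_mktuple => i; rewrite /var valK.
by rewrite /psubst E /= comp_mpoly_id.
Qed.

Lemma psubst_comp j k r (f : nat -> {mpoly rat[r]}) (g : nat -> {mpoly rat[k]})
    (p : {mpoly rat[j]}) :
  psubst k f (psubst j g p) = psubst j (fun m => psubst k f (g m)) p.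
Proof.
rewrite /= [comp_mpoly _ p]comp_mpolyEX [RHS]comp_mpolyEX raddf_sum /=.
apply: eq_bigr => mon _; rewrite comp_mpolyZ !comp_mpolyX rmorph_prod /=.
by congr (_ *: _); apply: eq_bigr => i _; rewrite rmorphXn !tnth_mktuple.
Qed.

Section SubstMorphism.
Variables (k r : nat) (f : nat -> {mpoly rat[r]}).
Hypothesis f_inj : injective (psubst k f).

Lemma subst_frac (n d : {mpoly rat[k]}) : d != 0 ->
  subst f (n%:F / d%:F) = (psubst k f n)%:F / (psubst k f d)%:F.
Proof. by rewrite substE; apply: fracmap_frac. Qed.

Lemma subst0 : subst f (0 : RatFun k) = 0.
Proof. by rewrite substE; apply: fracmap0. Qed.

Lemma substD : {morph @subst k r f : x y / x + y}.
Proof. by move=> x y; rewrite !substE; apply: fracmapD. Qed.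

Lemma substB : {morph @subst k r f : x y / x - y}.
Proof. by move=> x y; rewrite !substE; apply: fracmapB. Qed.

Lemma substM : {morph @subst k r f : x y / x * y}.
Proof. by move=> x y; rewrite !substE; apply: fracmapM. Qed.

Lemma subst_sum (I : Type) (s : seq I) (P : pred I) (F : I -> RatFun k) :
  subst f (\sum_(i <- s | P i) F i) = \sum_(i <- s | P i) subst f (F i).
Proof. exact: (big_morph _ substD subst0). Qed.

End SubstMorphism.

Lemma subst_comp j k r (f : nat -> {mpoly rat[r]}) (g : nat -> {mpoly rat[k]}) (x : RatFun j) :
  injective (psubst k f) -> injective (psubst j g) ->
  subst f (subst g x) = subst (fun m => psubst k f (g m)) x.
Proof.
move=> f_inj g_inj; have [[n d] /= d0 ->] := fracP x.
have fg_inj : injective (psubst j (fun m => psubst k f (g m))).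
  by move=> p q E; apply/g_inj/f_inj; rewrite [LHS]psubst_comp [RHS]psubst_comp.
rewrite (subst_frac g_inj _ d0) (subst_frac f_inj _ (rmorph_inj_neq0 g_inj d0)).
by rewrite (subst_frac fg_inj _ d0) -(psubst_comp f g n) -(psubst_comp f g d).
Qed.

Lemma var_out r c : (r <= c)%N -> var r c = 0.
Proof. by move=> rc; rewrite /var insubN // -leqNgt. Qed.

Section VarSubstitutions.
Variables (k r : nat) (g : nat -> nat).
Hypothesis g_lt : forall m, (m < k)%N -> (g m < r)%N.
Hypothesis g_inj : forall m1 m2, (m1 < k)%N -> (m2 < k)%N -> g m1 = g m2 -> m1 = m2.

Lemma psubst_var_diffs_inj c : (forall m, (m < k)%N -> g m != c) ->
  injective (psubst k (fun m => var r (g m) - var r c)).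
Proof.
move=> g_c.
(* Left inverse: [v_(g m)] goes back to [u_m], every other variable to 0. *)
pose h x := \sum_(m < k | g m == x) var k m.
apply: (can_inj (g := psubst r h)) => p.
rewrite [LHS]psubst_comp -[RHS]psubst_id; apply: psubst_ext => m mk.
have hc : psubst r h (var r c) = 0.
  have [cr|/var_out->] := ltnP c r; last exact: rmorph0.
  by rewrite psubst_var // /h big_pred0 // => i; apply/negbTE/g_c.
rewrite rmorphB /= hc subr0 psubst_var ?g_lt // /h (big_pred1 (Ordinal mk)) // => i /=.
by apply/eqP/eqP => [/g_inj gi|->]; [apply: val_inj; apply: gi | ].
Qed.

Lemma psubst_var_inj : injective (psubst k (fun m => var r (g m))).
Proof.
(* The pivot [c = r] is the junk variable [var r r = 0]. *)
apply: (eq_inj (psubst_var_diffs_inj (c := r) _)) => [m mk|p].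
  by rewrite neq_ltn g_lt.
by apply: psubst_ext => m _; rewrite (var_out (leqnn r)) subr0.
Qed.

End VarSubstitutions.

Section CyclicSums.
Variable V : nmodType.

Lemma sum_cyclic_shift r c (F : nat -> V) :
  \sum_(k < r) F ((c + k) %% r)%N = \sum_(k < r) F k.
Proof.
case: r => [|n]; first by rewrite !big_ord0.
pose h (k : 'I_n.+1) := Ordinal (ltn_pmod (c + k) (ltn0Sn n)).
have h_inj : injective h.
  move=> k1 k2 /(congr1 val) /= /eqP; rewrite eqn_modDl !modn_small // => /eqP.
  exact: val_inj.
by rewrite [RHS](reindex_inj h_inj).
Qed.

Lemma sum_pairs_by_gap r (F : nat -> nat -> V) :
  \sum_(0 <= j < r) \sum_(0 <= i < j) F i j =
  \sum_(1 <= l < r) \sum_(0 <= i < r - l) F i (i + l)%N.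
Proof.
elim: r => [|r IH]; first by rewrite !big_geq.
have [->|r_gt0] := posnP r; first by rewrite big_nat1 !big_geq.
have split_last l : (1 <= l < r.+1)%N -> \sum_(0 <= i < r.+1 - l) F i (i + l)%N =
    \sum_(0 <= i < r - l) F i (i + l)%N + F (r - l)%N r.
  by case/andP=> l_gt0 l_le; rewrite subSn // big_nat_recr //= subnK.
rewrite big_nat_recr //= IH (eq_big_nat _ _ split_last) big_split /=.
rewrite [in RHS]big_nat_recr //= subnn (big_geq (leqnn 0)) addr0; congr (_ + _).
rewrite big_add1 /= [LHS]big_nat_rev /=.
by apply: eq_big_nat => i /andP [_ ir]; congr F; lia.
Qed.

End CyclicSums.

Definition cshift r p : nat -> {mpoly rat[r]} := fun m => var r ((p + m) %% r).

Definition cycsum r (x : RatFun r) : RatFun r := \sum_(k < r) subst (cshift r k) x.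

Lemma cshift_inj r n p : (n <= r)%N -> injective (psubst n (cshift r p)).
Proof.
move=> nr; apply: psubst_var_inj => [m mn|m1 m2 m1n m2n /eqP]; first by rewrite ltn_pmod //; lia.
by rewrite eqn_modDl !modn_small ?(leq_trans _ nr) // => /eqP.
Qed.

Lemma subst_cshift_eqmod r p1 p2 n (x : RatFun n) : p1 = p2 %[mod r] ->
  subst (cshift r p1) x = subst (cshift r p2) x.
Proof. by move=> E; apply: subst_ext => m _; rewrite /cshift -modnDml E modnDml. Qed.

Lemma subst_cshift_shift r k i n (x : RatFun n) : (i + n <= r)%N ->
  subst (cshift r k) (subst (fun m => var r (i + m)) x) = subst (cshift r (k + i)) x.
Proof.
move=> inr; have shift_inj : injective (psubst n (fun m => var r (i + m))).
  by apply: psubst_var_inj => [m|m1 m2 _ _ /addnI] //; lia.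
rewrite (subst_comp _ (cshift_inj (p := k) (leqnn r)) shift_inj).
by apply: subst_ext => m mn; rewrite psubst_var /cshift ?addnA //; lia.
Qed.

Lemma cycsumD r : {morph @cycsum r : x y / x + y}.
Proof.
move=> x y; rewrite -big_split; apply: eq_bigr => k _.
by rewrite (substD (cshift_inj (p := k) (leqnn r))).
Qed.

Lemma cycsumB r : {morph @cycsum r : x y / x - y}.
Proof.
move=> x y; rewrite -sumrB; apply: eq_bigr => k _.
by rewrite (substB (cshift_inj (p := k) (leqnn r))).
Qed.

Lemma cycsum_sum r (I : Type) (s : seq I) (P : pred I) (F : I -> RatFun r) :
  cycsum (\sum_(i <- s | P i) F i) = \sum_(i <- s | P i) cycsum (F i).
Proof.
apply: (big_morph _ (@cycsumD r)).
by apply: big1 => k _; rewrite (subst0 (cshift_inj (leqnn r))).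
Qed.

Lemma cycsum_shift r c (x : RatFun r) : \sum_(k < r) subst (cshift r (c + k)) x = cycsum x.
Proof.
rewrite /cycsum -(sum_cyclic_shift r c (fun k => subst (cshift r k) x)).
by apply: eq_bigr => k _; apply: subst_cshift_eqmod; rewrite modn_mod.
Qed.

Lemma cycsumE r (x : RatFun r) :
  cycsum x = \sum_(i < r) subst (fun m => var r ((m + i) %% r)) x.
Proof. by apply: eq_bigr => k _; apply: subst_ext => m _; rewrite /cshift addnC. Qed.

Lemma circ_neutral_cycsum (A : mould) r : circ_neutral A -> (1 < r)%N -> cycsum (A r) = 0.
Proof. by move=> cA r_gt1; rewrite cycsumE cA. Qed.

Section MuTerms.
Variables (A B : mould) (r : nat).

Definition mu_term k i : RatFun r :=
  subst (cshift r k) (A i) * subst (cshift r (k + i)) (B (r - i)%N).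

Lemma subst_cshift_mu k : subst (cshift r k) (mu A B r) = \sum_(i < r.+1) mu_term k i.
Proof.
rewrite /mu (subst_sum (cshift_inj (p := k) (leqnn r))); apply: eq_bigr => i _.
rewrite (substM (cshift_inj (leqnn r))).
have -> : subst (fun m => var r m) (A i) = subst (fun m => var r (0 + m)) (A i) by [].
have ir := ltn_ord i; rewrite !subst_cshift_shift ?addn0 //; lia.
Qed.

Lemma mu_term_eqmod k1 k2 i : k1 = k2 %[mod r] -> mu_term k1 i = mu_term k2 i.
Proof.
move=> E; rewrite /mu_term (subst_cshift_eqmod _ E); congr (_ * _).
by apply: subst_cshift_eqmod; rewrite -modnDml E modnDml.
Qed.

End MuTerms.

Lemma mu_term_swap A B r k i : (i <= r)%N -> mu_term A B r k i = mu_term B A r (k + i) (r - i).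
Proof.
move=> ir; rewrite /mu_term subKn // mulrC; congr (_ * _).
by apply: subst_cshift_eqmod; rewrite -addnA subnKC // modnDr.
Qed.

Lemma cycsum_mu_swap A B r : cycsum (mu A B r) = cycsum (mu B A r).
Proof.
rewrite /cycsum; under eq_bigr do rewrite subst_cshift_mu.
under [RHS]eq_bigr do rewrite subst_cshift_mu.
rewrite exchange_big [RHS]exchange_big [RHS](reindex_inj rev_ord_inj) /=.
apply: eq_bigr => i _; rewrite subSS.
rewrite -(sum_cyclic_shift r i (fun k => mu_term B A r k (r - i))).
apply: eq_bigr => k _; rewrite mu_term_swap -1?ltnS //; apply: mu_term_eqmod.
by rewrite modn_mod addnC.
Qed.

Lemma cycsum_lu A B r : cycsum (lu A B r) = 0.
Proof. by rewrite cycsumB cycsum_mu_swap subrr. Qed.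

Definition cdiffs r p d : nat -> {mpoly rat[r]} :=
  fun m => var r ((p + m) %% r) - var r ((p + d) %% r).

Lemma psubst_gap_inj r i l :
  injective (psubst (r - l) (fun m => if (m < i)%N then var r m else var r (i + l + (m - i)))).
Proof.
pose gap m := if (m < i)%N then m else (i + l + (m - i))%N.
apply: (eq_inj (psubst_var_inj (g := gap) _ _)) => [m mlt|m1 m2 m1lt m2lt|p].
- by rewrite /gap; case: ifP; lia.
- by rewrite /gap; case: ifP; case: ifP; lia.
- by apply: psubst_ext => m _; rewrite /gap; case: ifP.
Qed.

Lemma psubst_block_diffs_inj r i l c : (i + l <= r)%N -> (c < i \/ i + l <= c)%N ->
  injective (psubst l (fun m => var r (i + m) - var r c)).
Proof.
move=> ilr c_out.
by apply: (psubst_var_diffs_inj (g := addn i)) => [m|m1 m2 _ _ /addnI|m] //; lia.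
Qed.

Section AritTerms.
Variables (A B : mould) (r : nat).

(* The summand of [amit B A] (pivot [c = j]) and of [anit B A] (pivot
   [c = i - 1]), in 0-based indices. *)
Definition arit_term i j c : RatFun r :=
  subst (fun m => if (m < i)%N then var r m else var r (j + (m - i))) (A (r - (j - i))%N)
  * subst (fun m => var r (i + m) - var r c) (B (j - i)%N).

(* [arit_term i (i + l) c] rotated by k, with [p = k + i]: A reads the
   variables after the block cyclically, rotated by [t = r - l - i]. *)
Definition block_term l t d p : RatFun r :=
  subst (cshift r (p + l)) (subst (cshift (r - l) t) (A (r - l)%N)) * subst (cdiffs r p d) (B l).

Definition block_sum l d p : RatFun r :=
  subst (cshift r (p + l)) (cycsum (A (r - l)%N)) * subst (cdiffs r p d) (B l).

Lemma subst_cshift_arit_term k i l c d : (0 < r)%N -> (i + l <= r)%N ->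
  (c < i \/ i + l <= c)%N -> ((i + d) %% r)%N = c ->
  subst (cshift r k) (arit_term i (i + l) c) = block_term l (r - l - i) d (k + i).
Proof.
move=> r_gt0 ilr c_out hc; rewrite /arit_term /block_term addKn.
have rot_inj := cshift_inj (p := k) (leqnn r).
rewrite (substM rot_inj) (subst_comp _ rot_inj (@psubst_gap_inj r i l)).
rewrite (subst_comp _ rot_inj (psubst_block_diffs_inj ilr c_out)).
rewrite (subst_comp _ (cshift_inj (p := k + i + l) (leq_subr l r))
                      (cshift_inj (p := r - l - i) (leqnn (r - l)))).
congr (_ * _); apply: subst_ext => m mlt.
  rewrite psubst_var ?ltn_pmod //; last by lia.
  case: ifP => mi; rewrite psubst_var /cshift; try lia; congr (var r _).
    rewrite (modn_small (_ : r - l - i + m < r - l)%N); last by lia.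
    by rewrite (_ : k + i + l + (r - l - i + m) = k + m + r)%N ?modnDr //; lia.
  rewrite (_ : r - l - i + m = m - i + (r - l))%N; last by lia.
  by rewrite modnDr (modn_small (_ : m - i < r - l)%N) ?addnA //; lia.
rewrite raddfB /= !psubst_var /cdiffs -?hc ?ltn_pmod //; try lia.
by rewrite /cshift modnDmr !addnA.
Qed.

Lemma block_term_eqmod l t d p1 p2 : p1 = p2 %[mod r] ->
  block_term l t d p1 = block_term l t d p2.
Proof.
move=> E; have Ex x : (p1 + x = p2 + x %[mod r])%N by rewrite -modnDml E modnDml.
rewrite /block_term (subst_cshift_eqmod _ (Ex l)); congr (_ * _).
by apply: subst_ext => m _; rewrite /cdiffs !Ex.
Qed.

Lemma cycsum_arit_term i l c d : (0 < r)%N -> (i + l <= r)%N ->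
  (c < i \/ i + l <= c)%N -> ((i + d) %% r)%N = c ->
  cycsum (arit_term i (i + l) c) = \sum_(p < r) block_term l (r - l - i) d p.
Proof.
move=> r_gt0 ilr c_out hc; rewrite /cycsum.
under eq_bigr => k _ do rewrite (subst_cshift_arit_term k r_gt0 ilr c_out hc).
rewrite -(sum_cyclic_shift r i (block_term l (r - l - i) d)).
by apply: eq_bigr => k _; apply: block_term_eqmod; rewrite modn_mod addnC.
Qed.

Lemma sum_block_term s l d p : (s <= 1)%N -> (l <= r)%N ->
  \sum_(0 <= i < r - l) block_term l (r - l - (s + i)) d p = block_sum l d p.
Proof.
move=> s_le1 lr; rewrite /block_sum -mulr_suml; congr (_ * _).
rewrite -(subst_sum (cshift_inj (p := p + l) (leq_subr l r))); congr subst.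
rewrite -(cycsum_shift (1 - s)) big_nat_rev big_mkord /=.
by apply: eq_bigr => i _; congr (subst (cshift _ _) _); have := ltn_ord i; lia.
Qed.

Lemma cycsum_arit_terms s (c : nat -> nat -> nat) (d : nat -> nat) :
  (0 < r)%N -> (s <= 1)%N ->
  (forall l i, (0 < l < r)%N -> (i < r - l)%N ->
     (c l i < s + i \/ s + i + l <= c l i)%N /\ ((s + i + d l) %% r)%N = c l i) ->
  cycsum (\sum_(1 <= l < r) \sum_(0 <= i < r - l) arit_term (s + i) (s + i + l) (c l i)) =
  \sum_(1 <= l < r) \sum_(p < r) block_sum l (d l) p.
Proof.
move=> r_gt0 s_le1 hcd; rewrite cycsum_sum; apply: eq_big_nat => l l_range.
rewrite cycsum_sum; transitivity
  (\sum_(0 <= i < r - l) \sum_(p < r) block_term l (r - l - (s + i)) (d l) p).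
  apply: eq_big_nat => i /andP [_ ilt]; have [c_out hc] := hcd l i l_range ilt.
  by rewrite (cycsum_arit_term r_gt0 _ c_out hc) //; lia.
rewrite exchange_big; apply: eq_bigr => p _; apply: sum_block_term => //; lia.
Qed.

Lemma block_sum_eq0 l d p : circ_neutral A -> (1 < r - l)%N -> block_sum l d p = 0.
Proof.
move=> cA rl; rewrite /block_sum circ_neutral_cycsum //.
by rewrite (subst0 (cshift_inj (leq_subr l r))) mul0r.
Qed.

End AritTerms.

(* Stated with [0 + i] to match [cycsum_arit_terms] at [s = 0]. *)
Lemma amit_by_gap A B r : amit B A r =
  \sum_(1 <= l < r) \sum_(0 <= i < r - l) arit_term A B r (0 + i) (0 + i + l) (i + l).
Proof.
rewrite -(sum_pairs_by_gap r (fun i j => arit_term A B r i j j)) big_mkord.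
by apply: eq_bigr => j _; rewrite big_mkord.
Qed.

Lemma anit_by_gap A B r : anit B A r =
  \sum_(1 <= l < r) \sum_(0 <= i < r - l) arit_term A B r (1 + i) (1 + i + l) i.
Proof.
rewrite -(sum_pairs_by_gap r (fun i j => arit_term A B r i.+1 j.+1 i)) big_mkord.
rewrite /anit big_ord_recl big_ord0 add0r; apply: eq_bigr => j _.
by rewrite big_mkord big_mkcond big_ord_recl /= add0r.
Qed.

(* For [l < r - 1] both block sums vanish by circ-neutrality of [A (r - l)];
   for [l = r - 1] the two pivots [p + l] and [p + r - 1] coincide. *)
Lemma cycsum_arit A B r : circ_neutral A -> cycsum (arit B A r) = 0.
Proof.
move=> cA; have [->|r_gt0] := posnP r; first by rewrite /cycsum big_ord0.
rewrite cycsumB amit_by_gap anit_by_gap.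
rewrite (@cycsum_arit_terms A B r 0 (fun l i => i + l)%N id) //; last first.
  by move=> l i _ ilt; split; [right | rewrite modn_small]; lia.
rewrite (@cycsum_arit_terms A B r 1 (fun l i => i) (fun=> r.-1)) //; last first.
  move=> l i _ ilt; split; first by left.
  by rewrite (_ : 1 + i + r.-1 = i + r)%N ?modnDr ?modn_small //; lia.
rewrite -sumrB big1_seq // => l /andP [_]; rewrite mem_index_iota => l_range.
rewrite -sumrB big1 // => p _.
have [l_lt|l_ge] := ltnP l r.-1; first by rewrite !block_sum_eq0 ?subrr //; lia.
by rewrite (_ : l = r.-1) ?subrr //; lia.
Qed.

Lemma ari0 A B : ari A B 0 = 0.
Proof.
rewrite /ari /arit /lu /mu /amit /anit !big_ord1 !big_ord0 /=.
by rewrite subrr add0r mulrC subrr.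
Qed.

Theorem lemma21 (A B : mould) :
  in_ARI A -> in_ARI B -> circ_neutral A -> circ_neutral B ->
  in_ARI (ari A B) /\ circ_neutral (ari A B).
Proof.
move=> _ _ cA cB; split=> [|r r_gt1]; first exact: ari0.
by rewrite -cycsumE cycsumD cycsumB !cycsum_arit // cycsum_lu subrr addr0.
Qed.
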